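(* Consider the two-period difference-in-differences setting with anticipation described in the context, and suppose: (i) (Sampling) $\{Y_{i0}(0,1), Y_{i0}(1,1), Y_{i0}(0), Y_{i1}(0), Y_{i1}(1), D_i, A_i\}_{i=1}^n$ are independent and identically distributed across $i$; (ii) $Y_{i0}(0)=Y_{i0}(0,1)$; (iii) (Parallel trends) $\mathbb{E}[g(Y_{i1}(0))-g(Y_{i0}(0))\mid D_i=1]=\mathbb{E}[g(Y_{i1}(0))-g(Y_{i0}(0))\mid D_i=0]$; (iv) $\mathbb{P}[A_i=1\mid D_i=1]\le \pi$ for a given $\pi\in(0,1)$; (v) $|\tau_g|\le|\mu_g|$. Let $m_g=\mathbb{E}[g(Y_{i1})-g(Y_{i0})\mid D_i=1]-\mathbb{E}[g(Y_{i1})-g(Y_{i0})\mid D_i=0]$. Then $\mu_g$ is partially identified via the closed interval \[\mu_g\in m_g\left[\min\left\{1,\frac{1}{1-\operatorname{sgn}(\tau_g\mu_g)\pi}\right\},\ \max\left\{1,\frac{1}{1-\operatorname{sgn}(\tau_g\mu_g)\pi}\right\}\right],\] i.e. $\mu_g=m_g c$ for some $c$ in the displayed interval of real numbers.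
   Context: There are two periods $t\in\{0,1\}$ and units $i=1,\dots,n$. Each unit has an observed binary treatment $D_i\in\{0,1\}$ (applied in period 1) and an unobserved binary anticipation status $A_i\in\{0,1\}$ in period 0 ($A_i=1$ means the unit anticipates). Potential outcomes: $Y_{i1}(d)$ for $d\in\{0,1\}$ in period 1; $Y_{i0}(0)$ in period 0 for untreated units; and $Y_{i0}(a,1)$, $a\in\{0,1\}$, the period-0 outcome of a unit that will be treated, with anticipation status $a$. Observed outcomes: $Y_{i1}=D_iY_{i1}(1)+(1-D_i)Y_{i1}(0)$ and $Y_{i0}=(1-D_i)Y_{i0}(0)+D_i[(1-A_i)Y_{i0}(0,1)+A_iY_{i0}(1,1)]$. Let $g$ be a known measurable real function with $\mathbb{E}|g(Y)|<\infty$ for the relevant outcomes. The parameter of interest is $\mu_g=\mathbb{E}[g(Y_{i1}(1))-g(Y_{i1}(0))\mid D_i=1]$, and the anticipatory effect is $\tau_g=\mathbb{E}[g(Y_{i0}(1,1))-g(Y_{i0}(0,1))\mid D_i=1,A_i=1]$. $\operatorname{sgn}$ denotes the sign function. *)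

From HB Require Import structures.
From mathcomp Require Import all_boot all_order all_algebra.
From mathcomp Require Import all_classical all_reals all_analysis.
Set Implicit Arguments. Unset Strict Implicit. Unset Printing Implicit Defensive.
Import Order.TTheory GRing.Theory Num.Theory.
Local Open Scope classical_set_scope.
Local Open Scope ring_scope.

Definition condE (R : realType) (d : measure_display) (T : measurableType d)
  (P : probability T R) (X : T -> R) (E : set T) : R :=
  fine (\int[P]_(x in E) (X x)%:E)%E / fine (P E).

Definition condP (R : realType) (d : measure_display) (T : measurableType d)
  (P : probability T R) (F E : set T) : R :=
  fine (P (F `&` E)) / fine (P E).

Definition obsY1 (T : Type) (R : Type) (D : T -> bool) (Y11 Y10 : T -> R) : T -> R :=
  fun x => if D x then Y11 x else Y10 x.
(* Y0 = (1-D) Y0(0) + D [(1-A) Y0(0,1) + A Y0(1,1)] *)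
Definition obsY0 (T : Type) (R : Type) (D A : T -> bool) (Y00 Y001 Y011 : T -> R)
  : T -> R :=
  fun x => if D x then (if A x then Y011 x else Y001 x) else Y00 x.

From HB Require Import structures.
From mathcomp Require Import all_boot all_order all_algebra.
From mathcomp Require Import all_classical all_reals all_analysis.
From mathcomp Require Import measurable_realfun ring lra.
Import Order.TTheory GRing.Theory Num.Theory numFieldTopology.Exports.
Local Open Scope classical_set_scope.
Local Open Scope ring_scope.

(* For treated units the observed change is the effect mu plus the untreated
   trend, minus the anticipation effect tau on the anticipating fraction
   r = P[A | D].  Parallel trends cancels the untreated trend, so
   m = mu - tau r = mu (1 - s) with s = (tau / mu) r.  As |tau| <= |mu| and
   r <= pi, s has the sign of tau mu and |s| <= pi, hence mu = m / (1 - s)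
   with 1 / (1 - s) between 1 and 1 / (1 - sgn(tau mu) pi). *)

Section Rescaling.
Variable R : realFieldType.

Lemma invf_1B_between (t s pi : R) : pi < 1 -> `|s| <= pi ->
  Num.sg t * s = `|s| ->
  Num.min 1 (1 - Num.sg t * pi)^-1 <= (1 - s)^-1 <= Num.max 1 (1 - Num.sg t * pi)^-1.
Proof.
move=> pi1 spi; rewrite ge_min le_max.
case: sgrP => [_|_|_]; rewrite ?mul0r ?mul1r ?mulN1r.
- by move/esym/eqP; rewrite normr_eq0 => /eqP ->; rewrite subr0 invr1 lexx.
- move=> es; have s0 : 0 <= s by rewrite es.
  apply/andP; split; apply/orP; [left | right].
    by rewrite invf_ge1 //; lra.
  by rewrite lef_pV2 ?posrE //; lra.
- move=> es; have s0 : s <= 0 by rewrite -oppr_ge0 es.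
  apply/andP; split; apply/orP; [right | left].
    by rewrite lef_pV2 ?posrE //; lra.
  by rewrite invf_le1 //; lra.
Qed.

Lemma anticipation_rescaling (mu tau r pi : R) :
  0 < pi < 1 -> 0 <= r <= pi -> `|tau| <= `|mu| ->
  let b := 1 / (1 - Num.sg (tau * mu) * pi) in
  exists c : R, Num.min 1 b <= c <= Num.max 1 b /\ mu = (mu - tau * r) * c.
Proof.
move=> /andP[pi0 pi1] /andP[r0 rpi] tau_mu b.
have [mu0 | mu0] := eqVneq mu 0.
  move: tau_mu; rewrite mu0 normr0 normr_le0 => /eqP ->.
  by exists 1; rewrite ge_min le_max lexx mul0r subr0 mul0r.
pose t := tau / mu; pose s := t * r.
have tauE : tau = t * mu by rewrite divfK.
have sgt : Num.sg (tau * mu) = Num.sg t.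
  by rewrite tauE -mulrA sgrM -expr2 sgrX sqr_sg mu0 mulr1.
have t1 : `|t| <= 1 by rewrite normf_div ler_pdivrMr ?normr_gt0 // mul1r.
have s_pi : `|s| <= pi.
  by rewrite /s normrM (ger0_norm r0) -[pi]mul1r ler_pM.
have sg_s : Num.sg t * s = `|s|.
  by rewrite /s mulrA -normrEsg (normrM t r) (ger0_norm r0).
have s1 : 1 - t * r != 0 by rewrite gt_eqF //; move: s_pi; rewrite /s ler_norml; lra.
exists (1 - s)^-1; split.
  by rewrite /b sgt div1r; apply: invf_1B_between.
by rewrite tauE /s; field.
Qed.

End Rescaling.

Section ConditionalExpectation.
Variables (R : realType) (d : measure_display) (T : measurableType d).
Variable P : probability T R.

Lemma integrableB_setT (E : set T) (f h : T -> R) : measurable E ->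
  P.-integrable setT (EFin \o f) -> P.-integrable setT (EFin \o h) ->
  P.-integrable E (EFin \o (f \- h)).
Proof.
move=> mE fi hi; apply: (integrableS measurableT mE (@subsetT _ E)).
have -> : EFin \o (f \- h) = ((EFin \o f) \- (EFin \o h))%E by [].
exact: integrableB.
Qed.

Lemma integrable_patch_setT (E A : set T) (f : T -> R) :
  measurable E -> measurable A -> P.-integrable setT (EFin \o f) ->
  P.-integrable E (EFin \o (f \_ A)).
Proof.
move=> mE mA fi; rewrite -restrict_EFin.
apply: (integrableS measurableT mE (@subsetT _ E)).
by apply/(integrable_mkcond _ mA)/(integrableS measurableT mA (@subsetT _ A)).
Qed.

Lemma condP_ge0 (F E : set T) : 0 <= condP P F E.
Proof. by rewrite divr_ge0 // fine_ge0 // measure_ge0. Qed.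

Lemma eq_condE (E : set T) (f h : T -> R) : {in E, f =1 h} ->
  condE P f E = condE P h E.
Proof. by move=> fh; rewrite /condE -!/(Rintegral _ _ _) (eq_Rintegral _ fh). Qed.

Lemma condED (E : set T) (f h : T -> R) : measurable E ->
  P.-integrable E (EFin \o f) -> P.-integrable E (EFin \o h) ->
  condE P (f \+ h) E = condE P f E + condE P h E.
Proof.
by move=> mE fi hi; rewrite /condE -!/(Rintegral _ _ _) (RintegralD mE fi hi) mulrDl.
Qed.

Lemma condEB (E : set T) (f h : T -> R) : measurable E ->
  P.-integrable E (EFin \o f) -> P.-integrable E (EFin \o h) ->
  condE P (f \- h) E = condE P f E - condE P h E.
Proof.
by move=> mE fi hi; rewrite /condE -!/(Rintegral _ _ _) (RintegralB mE fi hi) mulrBl.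
Qed.

(* No positivity hypothesis is needed: condE and condP divide by 0 on null
   events, and then both sides vanish. *)
Lemma condE_patch (E A : set T) (f : T -> R) : measurable E -> measurable A ->
  measurable_fun (E `&` A) f ->
  condE P (f \_ A) E = condE P f (E `&` A) * condP P A E.
Proof.
move=> mE mA mf; rewrite /condE /condP -!/(Rintegral _ _ _) -Rintegral_mkcondr setIC.
have [PAE0 | PAE0] := eqVneq (fine (P (A `&` E))) 0; last by rewrite mulrA divfK.
suff -> : Rintegral P (A `&` E) f = 0 by rewrite PAE0 !(mul0r, mulr0).
have mAE : measurable (A `&` E) by exact: measurableI.
rewrite /Rintegral null_set_integral //; first by rewrite setIC; exact/measurable_EFinP.
by apply/eqP; rewrite -(fine_eq0 (fin_num_measure _ _ mAE)) PAE0.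
Qed.

End ConditionalExpectation.

Theorem theorem1 (R : realType) (d : measure_display) (T : measurableType d)
  (P : probability T R)
  (Y00 Y001 Y011 Y10 Y11 : T -> R) (D A : T -> bool) (g : R -> R) (pi : R)
  (mY00 : measurable_fun setT Y00) (mY001 : measurable_fun setT Y001)
  (mY011 : measurable_fun setT Y011) (mY10 : measurable_fun setT Y10)
  (mY11 : measurable_fun setT Y11)
  (mD : measurable [set x | D x]) (mA : measurable [set x | A x])
  (mg : measurable_fun setT g)
  (iY00 : P.-integrable setT (fun x => (g (Y00 x))%:E))
  (iY001 : P.-integrable setT (fun x => (g (Y001 x))%:E))
  (iY011 : P.-integrable setT (fun x => (g (Y011 x))%:E))
  (iY10 : P.-integrable setT (fun x => (g (Y10 x))%:E))
  (iY11 : P.-integrable setT (fun x => (g (Y11 x))%:E))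
  (PD1 : (0 < P [set x | D x])%E)
  (PD0 : (0 < P [set x | ~~ D x])%E)
  (pi01 : 0 < pi < 1)
  (* (ii) *)
  (H2 : forall x, Y00 x = Y001 x)
  (* (iii) parallel trends *)
  (H3 : condE P (fun x => g (Y10 x) - g (Y00 x)) [set x | D x]
        = condE P (fun x => g (Y10 x) - g (Y00 x)) [set x | ~~ D x])
  (* (iv) *)
  (H4 : condP P [set x | A x] [set x | D x] <= pi)
  (* (v) *)
  (H5 : `| condE P (fun x => g (Y011 x) - g (Y001 x)) [set x | D x && A x] |
        <= `| condE P (fun x => g (Y11 x) - g (Y10 x)) [set x | D x] |) :
  let mu := condE P (fun x => g (Y11 x) - g (Y10 x)) [set x | D x] in
  let tau := condE P (fun x => g (Y011 x) - g (Y001 x)) [set x | D x && A x] in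
  let Y1 := obsY1 D Y11 Y10 in
  let Y0 := obsY0 D A Y00 Y001 Y011 in
  let m := condE P (fun x => g (Y1 x) - g (Y0 x)) [set x | D x]
           - condE P (fun x => g (Y1 x) - g (Y0 x)) [set x | ~~ D x] in
  let b := 1 / (1 - Num.sg (tau * mu) * pi) in
  exists c : R, Num.min 1 b <= c <= Num.max 1 b /\ mu = m * c.
Proof.
move=> mu tau Y1 Y0 m b.
set SD := [set x | D x]; set SN := [set x | ~~ D x]; set SA := [set x | A x].
have mN : measurable SN.
  have -> : SN = ~` SD by apply/seteqP; split=> x /= /negP.
  exact: measurableC.
have SDA : [set x | D x && A x] = SD `&` SA.
  by apply/seteqP; split=> x /=; [move/andP | move=> [-> ->]].
pose trend := (g \o Y10) \- (g \o Y00).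
pose effect := (g \o Y11) \- (g \o Y10).
pose anticipation := (g \o Y011) \- (g \o Y001).
have treated : condE P (fun x => g (Y1 x) - g (Y0 x)) SD
    = mu + condE P trend SD - tau * condP P SA SD.
  rewrite (@eq_condE _ _ _ _ _ _ (effect \+ trend \- anticipation \_ SA)); last first.
    move=> x /set_mem Dx; rewrite /Y1 /Y0 /obsY1 /obsY0 Dx /= patchE.
    rewrite /effect /trend /anticipation /= H2.
    have -> : (x \in SA) = A x by apply/idP/idP => [/set_mem | /mem_set].
    by case: (A x) => /=; rewrite /point /=; lra.
  rewrite condEB //; last 2 first.
  - by apply: (@integrableD _ _ _ _ _ _ (EFin \o effect) (EFin \o trend)) => //;
      apply: integrableB_setT.
  - by apply: integrable_patch_setT => //; apply: integrableB_setT.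
  rewrite condED //; try exact: integrableB_setT.
  rewrite condE_patch // -SDA //.
  by apply/measurable_funTS/measurable_funB; exact: measurableT_comp.
have control : condE P (fun x => g (Y1 x) - g (Y0 x)) SN = condE P trend SN.
  by apply: eq_condE => x /set_mem /negbTE Dx; rewrite /Y1 /Y0 /obsY1 /obsY0 Dx.
have mE : m = mu - tau * condP P SA SD.
  by rewrite /m treated control -(H3 : condE P trend SD = condE P trend SN); ring.
have r_pi : 0 <= condP P SA SD <= pi by rewrite condP_ge0 H4.
by rewrite mE; exact: anticipation_rescaling.
Qed.
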